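(* Let $\mathcal{X}\subseteq\mathbb{R}^d$ be compact, $c\ge2$, and $\{(\mathbf{x}_i,y_i)\}_{i=1}^n$ i.i.d. labeled data with $y_i\in\{1,\dots,c\}$. Let $S\colon\mathcal{X}\times\mathcal{X}\to[0,1]$ be symmetric continuous, and assume the eigenvalues $\lambda_k$ and orthonormal eigenfunctions $\phi_k$ of $(L_Sf)(\mathbf{x})=\int S(\mathbf{x},\mathbf{t})f(\mathbf{t})\,d\mathbf{t}$ satisfy $\sum_k\lambda_k|\phi_k(\mathbf{x})|^2<C$ for all $\mathbf{x}$, for some $C>0$; let $S^+=\sum_{k:\lambda_k\ge0}\lambda_k\phi_k\otimes\phi_k$ and $S^-=\sum_{k:\lambda_k<0}|\lambda_k|\phi_k\otimes\phi_k$. Let $B^+,B^-,R>0$ with $\sup_{\mathbf{x}\in\mathcal{X}}|S^+(\mathbf{x},\mathbf{x})|\le R^2$ and $\sup_{\mathbf{x}\in\mathcal{X}}|S^-(\mathbf{x},\mathbf{x})|\le R^2$, and let $\mathcal{H}_S$ be the class of margin functions defined below. Then for $\delta\in(0,1)$, with probability at least $1-\delta$ over the data $\{\mathbf{x}_i\}_{i=1}^n$, $$\mathfrak{R}(\mathcal{H}_S)\le\frac{R(2c-1)c(B^++B^-)}{\sqrt n}+2c(2c-1)(B^++B^-)R^2\sqrt{\frac{\ln(2/\delta)}{2n}}.$$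
   Context: $\boldsymbol{\alpha}^{(y)}$ has entries $\alpha_i$ if $y_i=y$ and $0$ otherwise; $[\mathbf{S}^\pm]_{ij}=S^\pm(\mathbf{x}_i,\mathbf{x}_j)$; $\Omega^\pm(\boldsymbol{\alpha})=\sum_{y=1}^c{\boldsymbol{\alpha}^{(y)}}^\top\mathbf{S}^\pm\boldsymbol{\alpha}^{(y)}$. For $1\le y\le c$, $\mathcal{H}_{S,y}=\{\mathbf{x}\mapsto\sum_{i:y_i=y}\alpha_iS(\mathbf{x},\mathbf{x}_i):\boldsymbol{\alpha}\ge0,\mathbf{1}^\top\boldsymbol{\alpha}=1,\Omega^+(\boldsymbol{\alpha})\le(B^+)^2,\Omega^-(\boldsymbol{\alpha})\le(B^-)^2\}$, and $\mathcal{H}_S$ is the class of margin functions $m_{h_S}(\mathbf{x},y)=h_S(\mathbf{x},y)-\max_{y'\neq y}h_S(\mathbf{x},y')$ with $h_S(\cdot,y)\in\mathcal{H}_{S,y}$. The Rademacher complexity of a class $\mathcal{A}$ is $\mathfrak{R}(\mathcal{A})=\mathbb{E}_{\{\sigma_i\},\{\mathbf{x}_i\}}\big[\sup_{h\in\mathcal{A}}\big|\frac1n\sum_{i=1}^n\sigma_ih(\mathbf{x}_i)\big|\big]$ with $\sigma_i$ i.i.d. uniform on $\{-1,1\}$ (for $\mathcal{H}_S$, $h(\mathbf{x}_i)$ means $m_{h_S}(\mathbf{x}_i,y_i)$). *)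

From HB Require Import structures.
From mathcomp Require Import all_boot all_order all_algebra.
From mathcomp Require Import all_classical all_reals all_analysis.
Set Implicit Arguments. Unset Strict Implicit. Unset Printing Implicit Defensive.
Import Order.TTheory GRing.Theory Num.Theory.
Import numFieldNormedType.Exports.
Local Open Scope classical_set_scope.
Local Open Scope ring_scope.

Section Defs.
Variable R : realType.

(* Points of R^d are d-tuples of reals (this type carries the product
   (Borel) sigma-algebra of the library).  For topological notions
   (compactness, continuity) we transport them to row vectors 'rV[R]_d. *)
Definition rowv d (t : d.-tuple R) : 'rV[R]_d := \row_i tnth t i.
Definition tupv d (u : 'rV[R]_d) : d.-tuple R := [tuple u ord0 i | i < d].

(* Lebesgue integral over R^d, written as the iterated one-dimensional
   Lebesgue integral (Fubini). *)
Fixpoint leb_int (d : nat) : (d.-tuple R -> \bar R) -> \bar R :=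
  match d with
  | 0 => fun f => f [tuple]
  | d'.+1 => fun f =>
      (\int[lebesgue_measure]_(s in [set: R])
         leb_int (fun u : d'.-tuple R => f (cons_tuple s u)))%E
  end.

Definition intX d (X : set (d.-tuple R)) (f : d.-tuple R -> R) : \bar R :=
  leb_int (fun t => (\1_X t * f t)%:E).

Definition Splus d (lam : nat -> R) (phi : nat -> d.-tuple R -> R) x t : R :=
  limn (fun N => \sum_(k < N | 0 <= lam k) lam k * phi k x * phi k t).
Definition Sminus d (lam : nat -> R) (phi : nat -> d.-tuple R -> R) x t : R :=
  limn (fun N => \sum_(k < N | lam k < 0) `|lam k| * phi k x * phi k t).

(* Diagonal values S^+(x,x), S^-(x,x): series of nonnegative terms,
   taken in the extended reals (so that they are always well defined). *)
Definition Splus_diag d (lam : nat -> R) (phi : nat -> d.-tuple R -> R) x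
  : \bar R := (\sum_(k <oo | (0 <= lam k)%R) (lam k * phi k x ^+ 2)%:E)%E.
Definition Sminus_diag d (lam : nat -> R) (phi : nat -> d.-tuple R -> R) x
  : \bar R := (\sum_(k <oo | (lam k < 0)%R) (`|lam k| * phi k x ^+ 2)%:E)%E.

Definition alpha_cls n (ys : 'I_n -> nat) (a : 'I_n -> R) (y : nat) :=
  fun i => if ys i == y then a i else 0.

Definition Omega T n (K : T -> T -> R) (xs : 'I_n -> T) (ys : 'I_n -> nat)
  (c : nat) (a : 'I_n -> R) : R :=
  \sum_(1 <= y < c.+1) \sum_i \sum_j
     alpha_cls ys a y i * K (xs i) (xs j) * alpha_cls ys a y j.

Definition HSy T n (S Sp Sm : T -> T -> R) (Bp Bm : R)
  (xs : 'I_n -> T) (ys : 'I_n -> nat) (c y : nat) : set (T -> R) :=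
  [set h | exists a : 'I_n -> R,
     [/\ (forall i, 0 <= a i), \sum_i a i = 1,
         Omega Sp xs ys c a <= Bp ^+ 2,
         Omega Sm xs ys c a <= Bm ^+ 2 &
         h = fun x => \sum_(i | ys i == y) a i * S x (xs i)]].

(* max_{y' in {1..c}, y' <> y} g y'  (a nonempty finite max when c >= 2) *)
Definition max_other (g : nat -> R) (c y : nat) : R :=
  fine (\big[Order.max/-oo%E]_(1 <= y' < c.+1 | y' != y) (g y')%:E)%E.

Definition HS T n (S Sp Sm : T -> T -> R) (Bp Bm : R)
  (xs : 'I_n -> T) (ys : 'I_n -> nat) (c : nat) : set (T -> nat -> R) :=
  [set m | exists h : nat -> T -> R,
     (forall y, (1 <= y <= c)%N -> HSy S Sp Sm Bp Bm xs ys c y (h y)) /\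
     m = fun x y => h y x - max_other (fun y' => h y' x) c y].

Definition iid_from dO (O : measurableType dO) (P : probability O R)
  dT (T : measurableType dT) (D : probability T R) n (Z : 'I_n -> O -> T) :=
  [/\ (forall i, measurable_fun setT (Z i)),
      (forall i (A : set T), measurable A -> P (Z i @^-1` A) = D A) &
      (forall A : 'I_n -> set T, (forall i, measurable (A i)) ->
         P (\bigcap_(i in [set: 'I_n]) (Z i @^-1` A i)) =
         (\prod_(i < n) P (Z i @^-1` A i))%E)].

(* Rademacher complexity of a class A of functions of (x,y), w.r.t. an
   i.i.d. sample Z (the expectation over the sample is the integral over P),
   the signs sigma ranging uniformly over {-1,1}^n. *)
Definition Rademacher dO (O : measurableType dO) (P : probability O R)
  T n (Z : 'I_n -> O -> T * nat) (A : set (T -> nat -> R)) : \bar R :=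
  ((2 ^ n)%:R^-1%:E *
   \sum_(s : {ffun 'I_n -> bool})
     \int[P]_w ereal_sup
        [set (`| n%:R^-1 * \sum_i (-1) ^+ s i * m (Z i w).1 (Z i w).2 |)%:E
        | m in A])%E.

End Defs.

From HB Require Import structures.
From mathcomp Require Import all_boot all_order all_algebra.
From mathcomp Require Import all_classical all_reals all_analysis.
From mathcomp.algebra_tactics Require Import ring lra.

Set Implicit Arguments.
Unset Strict Implicit.
Unset Printing Implicit Defensive.
Import Order.TTheory GRing.Theory Num.Theory.
Import numFieldNormedType.Exports.
Local Open Scope classical_set_scope.
Local Open Scope ring_scope.

(* The bound holds for every training sample.  The eigen-expansion splits S
   as S+ - S-, two positive semidefinite kernels with diagonal at most R^2; by
   Cauchy-Schwarz in their feature spaces every h in H_{S,y} satisfies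
   |sum_j b_j h(u_j)| <= B+ sqrt(b^T S+ b) + B- sqrt(b^T S- b), and averaging
   over the 2^n sign vectors (Jensen) bounds the Rademacher sum of one class by
   2^n (B+ + B-) R sqrt n.  For c = 2 the margin is linear in h, which gives
   twice that.  For c >= 3 the maximum over the other labels is the maximum
   over all labels of h_y' - L [y' = y] for a large penalty L; the Rademacher
   sum of a pointwise maximum is at most the sum of those of its arguments
   (contraction by |.|), and anchoring the absolute value at a fixed hypothesis
   gives the factor 3c + 1 <= c (2c - 1). *)

Lemma sum_sqrt_le (R : realType) (I : finType) (q : I -> R) (nu : R) :
  0 <= nu -> (forall i, 0 <= q i) -> \sum_i q i <= #|I|%:R * nu ^+ 2 ->
  \sum_i Num.sqrt (q i) <= #|I|%:R * nu.
Proof.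
rewrite le_eqVlt => /predU1P[<- q0|nu0 q0 hq].
  rewrite expr2 !mulr0 => hq.
  have sq0 : \sum_i q i = 0 by apply/eqP; rewrite eq_le hq sumr_ge0.
  by rewrite big1 // => i _; rewrite (psumr_eq0P (fun i _ => q0 i) sq0) ?sqrtr0.
have amgm i : Num.sqrt (q i) <= (q i / nu + nu) / 2.
  rewrite -subr_ge0.
  have -> : (q i / nu + nu) / 2 - Num.sqrt (q i)
          = (Num.sqrt (q i) - nu) ^+ 2 / (2 * nu).
    by rewrite -{1}[q i](sqr_sqrtr (q0 i)); field; rewrite gt_eqF.
  by rewrite divr_ge0 ?sqr_ge0 // mulr_ge0 // ltW.
apply: le_trans (ler_sum _ (fun i _ => amgm i)) _.
rewrite -mulr_suml big_split /= -mulr_suml sumr_const -mulr_natl.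
have : (\sum_i q i) / nu <= #|I|%:R * nu by rewrite ler_pdivrMr // -mulrA -expr2.
lra.
Qed.

Section RademacherSigns.
Variables (R : realType) (n : nat).
Local Notation signs := {ffun 'I_n -> bool}.

Definition rsign (s : signs) (j : 'I_n) : R := (-1) ^+ s j.

Lemma rsignE s j : rsign s j = if s j then -1 else 1.
Proof. by rewrite /rsign; case: (s j); rewrite ?expr1 ?expr0. Qed.

Lemma rsign_mul_self s j : rsign s j * rsign s j = 1.
Proof. by rewrite rsignE; case: (s j); rewrite ?mulrNN mulr1. Qed.

Lemma normr_rsign s j : `|rsign s j| = 1.
Proof. by rewrite rsignE; case: (s j); rewrite ?normrN normr1. Qed.

Definition flip_at (j : 'I_n) (s : signs) : signs :=
  [ffun i => if i == j then ~~ s i else s i].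
Definition flip_all (s : signs) : signs := [ffun i => ~~ s i].

Lemma flip_atK j : involutive (flip_at j).
Proof.
by move=> s; apply/ffunP => i; rewrite !ffunE; case: (i == j); rewrite ?negbK.
Qed.

Lemma flip_allK : involutive flip_all.
Proof. by move=> s; apply/ffunP => i; rewrite !ffunE negbK. Qed.

Lemma rsign_flip_at s j : rsign (flip_at j s) j = - rsign s j.
Proof. by rewrite !rsignE ffunE eqxx; case: (s j); rewrite ?opprK. Qed.

Lemma rsign_flip_at_neq s j i : i != j -> rsign (flip_at j s) i = rsign s i.
Proof. by move=> ij; rewrite /rsign ffunE (negbTE ij). Qed.

Lemma rsign_flip_all s i : rsign (flip_all s) i = - rsign s i.
Proof. by rewrite !rsignE ffunE; case: (s i); rewrite ?opprK. Qed.

Lemma sum_flip_at j (F : signs -> R) : \sum_s F (flip_at j s) = \sum_s F s.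
Proof. by rewrite [RHS](reindex_inj (inv_inj (flip_atK j))). Qed.

Lemma sum_flip_all (F : signs -> R) : \sum_s F (flip_all s) = \sum_s F s.
Proof. by rewrite [RHS](reindex_inj (inv_inj flip_allK)). Qed.

Lemma card_signs : #|{: signs}| = (2 ^ n)%N.
Proof. by rewrite card_ffun card_bool card_ord. Qed.

Lemma sum_signs_cst (a : R) : \sum_(s : signs) a = (2 ^ n)%:R * a.
Proof. by rewrite sumr_const card_signs mulr_natl. Qed.

Lemma sum_odd_flip_at j (F : signs -> R) :
  (forall s, F (flip_at j s) = - F s) -> \sum_s F s = 0.
Proof.
move=> FN; have : \sum_s F s = - \sum_s F s.
  by rewrite -[LHS](sum_flip_at j) -sumrN; apply: eq_bigr => s _.
lra.
Qed.

Lemma sum_rsign j : \sum_(s : signs) rsign s j = 0.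
Proof. by apply: (@sum_odd_flip_at j) => s; rewrite rsign_flip_at. Qed.

Lemma sum_rsign_mul j l :
  \sum_(s : signs) rsign s j * rsign s l = (j == l)%:R * (2 ^ n)%:R.
Proof.
have [<-|jl] := eqVneq j l.
  by under eq_bigr do rewrite rsign_mul_self; rewrite sum_signs_cst mulr1 mul1r.
rewrite mul0r; apply: (@sum_odd_flip_at j) => s.
by rewrite rsign_flip_at rsign_flip_at_neq 1?eq_sym // mulNr.
Qed.

Lemma sum_rsign_quad (K : 'I_n -> 'I_n -> R) :
  \sum_(s : signs) \sum_j \sum_l rsign s j * rsign s l * K j l
  = (2 ^ n)%:R * \sum_j K j j.
Proof.
rewrite exchange_big /= mulr_sumr; apply: eq_bigr => j _.
rewrite exchange_big /= (bigD1 j) //= [X in _ + X]big1 ?addr0 => [|l lj].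
  by rewrite -mulr_suml sum_rsign_mul eqxx mul1r.
by rewrite -mulr_suml sum_rsign_mul eq_sym (negbTE lj) !mul0r.
Qed.

Lemma sum_sqrt_rsign_quad_le (K : 'I_n -> 'I_n -> R) (nu : R) : 0 <= nu ->
  (forall s, 0 <= \sum_j \sum_l rsign s j * rsign s l * K j l) ->
  (forall j, K j j <= nu ^+ 2) ->
  \sum_(s : signs) Num.sqrt (\sum_j \sum_l rsign s j * rsign s l * K j l)
  <= (2 ^ n)%:R * (nu * Num.sqrt n%:R).
Proof.
move=> nu0 K0 Kjj; rewrite -card_signs; apply: sum_sqrt_le => //.
  by rewrite mulr_ge0 ?sqrtr_ge0.
rewrite sum_rsign_quad card_signs ler_wpM2l // exprMn sqr_sqrtr // mulr_natr.
by rewrite -[X in _ *+ X]card_ord -sumr_const ler_sum.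
Qed.

Lemma sum_abs_rsign_le (w : 'I_n -> R) (K : R) : 0 <= K -> (forall j, `|w j| <= K) ->
  \sum_(s : signs) `|\sum_j rsign s j * w j| <= (2 ^ n)%:R * (K * Num.sqrt n%:R).
Proof.
move=> K0 wK.
have sqrE s : (\sum_j rsign s j * w j) ^+ 2
    = \sum_j \sum_l rsign s j * rsign s l * (w j * w l).
  rewrite expr2 mulr_suml; apply: eq_bigr => j _.
  by rewrite mulr_sumr; apply: eq_bigr => l _; ring.
under eq_bigr do rewrite -sqrtr_sqr sqrE.
apply: sum_sqrt_rsign_quad_le => // [s|j]; first by rewrite -sqrE sqr_ge0.
by rewrite -expr2 -(real_normK (num_real (w j))) lerXn2r ?nnegrE.
Qed.

End RademacherSigns.

Lemma lipschitz1P (R : realType) (phi : R -> R) :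
  1.-lipschitz phi -> forall u v, `|phi u - phi v| <= `|u - v|.
Proof. by move=> L u v; rewrite -[leRHS]mul1r; exact: (L (u, v)). Qed.

Lemma lipschitz_normr (R : realType) : 1.-lipschitz (@Num.norm R R).
Proof. by move=> [u v] _ /=; rewrite mul1r; exact: ler_dist_dist. Qed.

Section RademacherSum.
Variables (R : realType) (T : Type) (A : set T) (h0 : T).
Hypothesis Ah0 : A h0.

Definition bounded_on (f : T -> R) := exists K, forall h, A h -> `|f h| <= K.
Definition sup_on (f : T -> R) := sup [set f h | h in A].

Lemma sup_on_ub f h : bounded_on f -> A h -> f h <= sup_on f.
Proof.
move=> [K fK] Ah; apply: ub_le_sup; last by exists h.
by exists K => _ [h' Ah' <-]; exact: le_trans (ler_norm _) (fK _ Ah').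
Qed.

Lemma sup_on_le f b : (forall h, A h -> f h <= b) -> sup_on f <= b.
Proof.
move=> fb; apply: ge_sup; first by exists (f h0), h0.
by move=> _ [h Ah <-]; exact: fb.
Qed.

Lemma sup_onD f g : bounded_on f -> bounded_on g ->
  sup_on (fun h => f h + g h) <= sup_on f + sup_on g.
Proof. by move=> bf bg; apply: sup_on_le => h Ah; apply: lerD; exact: sup_on_ub. Qed.

Lemma sup_onZ k f : 0 <= k -> bounded_on f ->
  sup_on (fun h => k * f h) <= k * sup_on f.
Proof. by move=> k0 bf; apply: sup_on_le => h Ah; rewrite ler_wpM2l // sup_on_ub. Qed.

Lemma sup_on_contract (phi : R -> R) (a x : T -> R) : 1.-lipschitz phi ->
  bounded_on a -> bounded_on x ->
  sup_on (fun h => a h + phi (x h)) + sup_on (fun h => a h - phi (x h))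
  <= sup_on (fun h => a h + x h) + sup_on (fun h => a h - x h).
Proof.
move=> /lipschitz1P L [Ka Ha] [Kx Hx].
have bp : bounded_on (fun h => a h + x h).
  by exists (Ka + Kx) => h Ah; rewrite (le_trans (ler_normD _ _)) ?lerD ?Ha ?Hx.
have bm : bounded_on (fun h => a h - x h).
  by exists (Ka + Kx) => h Ah; rewrite (le_trans (ler_normB _ _)) ?lerD ?Ha ?Hx.
set rhs := (X in _ <= X).
(* by the Lipschitz bound, the pair (h, h') on the left is dominated by the
   better of the pairings (h, h') and (h', h) on the right *)
have pair h h' : A h -> A h' -> (a h + phi (x h)) + (a h' - phi (x h')) <= rhs.
  move=> Ah Ah'; have Lh := le_trans (ler_norm _) (L (x h) (x h')).
  have := sup_on_ub bp Ah; have := sup_on_ub bm Ah'.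
  have := sup_on_ub bp Ah'; have := sup_on_ub bm Ah.
  have [xx|xx] := lerP 0 (x h - x h').
    by rewrite (ger0_norm xx) in Lh; rewrite /rhs; lra.
  by rewrite (ltr0_norm xx) in Lh; rewrite /rhs; lra.
have H1 h' : A h' -> sup_on (fun h => a h + phi (x h)) <= rhs - (a h' - phi (x h')).
  by move=> Ah'; apply: sup_on_le => h Ah; have := pair h h' Ah Ah'; lra.
have : sup_on (fun h => a h - phi (x h)) <= rhs - sup_on (fun h => a h + phi (x h)).
  by apply: sup_on_le => h' Ah'; have := H1 h' Ah'; lra.
lra.
Qed.

Variable n : nat.
Local Notation signs := {ffun 'I_n -> bool}.

Definition bounded_family (v : T -> 'I_n -> R) :=
  exists K, forall h, A h -> forall j, `|v h j| <= K.
Definition sign_sum (s : signs) (v : T -> 'I_n -> R) h := \sum_j rsign R s j * v h j.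
Definition radsum (v : T -> 'I_n -> R) := \sum_(s : signs) sup_on (sign_sum s v).

Lemma bounded_on_sum (Q : pred 'I_n) (c : 'I_n -> R) v :
  bounded_family v -> bounded_on (fun h => \sum_(j | Q j) c j * v h j).
Proof.
move=> [K HK]; exists (\sum_(j | Q j) `|c j| * K) => h Ah.
rewrite (le_trans (ler_norm_sum _ _ _)) // ler_sum // => j _.
by rewrite normrM ler_wpM2l ?HK.
Qed.

Lemma bounded_sign_sum s v : bounded_family v -> bounded_on (sign_sum s v).
Proof. exact: bounded_on_sum. Qed.

Lemma bounded_familyD v w : bounded_family v -> bounded_family w ->
  bounded_family (fun h j => v h j + w h j).
Proof.
move=> [K1 H1] [K2 H2]; exists (K1 + K2) => h Ah j.
by rewrite (le_trans (ler_normD _ _)) ?lerD ?H1 ?H2.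
Qed.

Lemma bounded_familyN v : bounded_family v -> bounded_family (fun h j => - v h j).
Proof. by move=> [K H]; exists K => h Ah j; rewrite normrN H. Qed.

Lemma bounded_family_lipschitz phi v : 1.-lipschitz phi -> bounded_family v ->
  bounded_family (fun h j => phi (v h j)).
Proof.
move=> /lipschitz1P L [K H]; exists (`|phi 0| + K) => h Ah j.
rewrite -[phi _](subrK (phi 0)) (le_trans (ler_normD _ _)) // addrC lerD2l.
by rewrite (le_trans (L _ _)) // subr0 H.
Qed.

Lemma bounded_family_max v w : bounded_family v -> bounded_family w ->
  bounded_family (fun h j => Num.max (v h j) (w h j)).
Proof.
move=> [K1 H1] [K2 H2]; exists (K1 + K2) => h Ah j.
have := H1 h Ah j; have := H2 h Ah j.
have := normr_ge0 (v h j); have := normr_ge0 (w h j).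
by case: (leP (v h j) (w h j)) => _; lra.
Qed.

Lemma sign_sumN s v h : sign_sum s (fun h j => - v h j) h = - sign_sum s v h.
Proof. by rewrite /sign_sum -sumrN; apply: eq_bigr => j _; rewrite mulrN. Qed.

Lemma sum_sign_sum v h : \sum_(s : signs) sign_sum s v h = 0.
Proof.
rewrite /sign_sum exchange_big /= big1 // => j _.
by rewrite -mulr_suml sum_rsign mul0r.
Qed.

Lemma radsumD v w : bounded_family v -> bounded_family w ->
  radsum (fun h j => v h j + w h j) <= radsum v + radsum w.
Proof.
move=> bv bw; rewrite /radsum -big_split ler_sum // => s _.
have -> : sign_sum s (fun h j => v h j + w h j)
    = fun h => sign_sum s v h + sign_sum s w h.
  apply: funext => h; rewrite /sign_sum -big_split.
  by apply: eq_bigr => j _; rewrite mulrDr.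
by apply: sup_onD; exact: bounded_sign_sum.
Qed.

Lemma radsumN v : radsum (fun h j => - v h j) = radsum v.
Proof.
rewrite /radsum -[RHS]sum_flip_all; apply: eq_bigr => s _; congr sup_on.
apply: funext => h; rewrite sign_sumN /sign_sum -sumrN; apply: eq_bigr => j _.
by rewrite rsign_flip_all mulNr.
Qed.

Lemma radsumZ k v : 0 <= k -> bounded_family v ->
  radsum (fun h j => k * v h j) <= k * radsum v.
Proof.
move=> k0 bv; rewrite /radsum mulr_sumr ler_sum // => s _.
have -> : sign_sum s (fun h j => k * v h j) = fun h => k * sign_sum s v h.
  apply: funext => h; rewrite /sign_sum mulr_sumr.
  by apply: eq_bigr => j _; rewrite mulrCA.
by apply: sup_onZ => //; exact: bounded_sign_sum.
Qed.

Lemma radsum_shift v (b : 'I_n -> R) : bounded_family v ->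
  radsum (fun h j => v h j + b j) <= radsum v.
Proof.
move=> bv; rewrite /radsum.
apply: le_trans (_ : _ <= \sum_(s : signs)
  (sup_on (sign_sum s v) + \sum_j rsign R s j * b j)) _.
  apply: ler_sum => s _; apply: sup_on_le => h Ah.
  rewrite /sign_sum; under eq_bigr do rewrite mulrDr.
  by rewrite big_split /= lerD2r (sup_on_ub (bounded_sign_sum s bv)).
by rewrite big_split /= (sum_sign_sum (fun _ => b) h0) addr0.
Qed.

Lemma radsum_contract_at phi (j0 : 'I_n) v w : 1.-lipschitz phi -> bounded_family v ->
  (forall h j, j != j0 -> w h j = v h j) -> (forall h, w h j0 = phi (v h j0)) ->
  radsum w <= radsum v.
Proof.
move=> L bv wv wj0.
pose a s h := \sum_(j | j != j0) rsign R s j * v h j.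
have sign_sum_at s u h : (forall j, j != j0 -> u h j = v h j) ->
    sign_sum s u h = a s h + rsign R s j0 * u h j0.
  move=> uv; rewrite /sign_sum (bigD1 j0) //= addrC; congr (_ + _).
  by apply: eq_bigr => j /uv ->.
have a_flip s h : a (flip_at j0 s) h = a s h.
  by apply: eq_bigr => j jj0; rewrite rsign_flip_at_neq.
(* pairing s with its flip at j0 reduces the claim to the two-point inequality *)
have pair s : sup_on (sign_sum s w) + sup_on (sign_sum (flip_at j0 s) w)
    <= sup_on (sign_sum s v) + sup_on (sign_sum (flip_at j0 s) v).
  set e := rsign R s j0.
  have ee u : e * (e * u) = u by rewrite mulrA rsign_mul_self mul1r.
  have Le : 1.-lipschitz (fun u => e * phi (e * u)).
    move=> [u u'] _ /=; rewrite -mulrBr normrM normr_rsign !mul1r.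
    by rewrite (le_trans (lipschitz1P L _ _)) // -mulrBr normrM normr_rsign mul1r.
  have ba : bounded_on (a s) by exact: bounded_on_sum.
  have bx : bounded_on (fun h => e * v h j0).
    by case: bv => K HK; exists K => h Ah; rewrite normrM normr_rsign mul1r HK.
  have := sup_on_contract Le ba bx; rewrite -/e.
  have -> : sign_sum s w = fun h => a s h + e * phi (e * (e * v h j0)).
    by apply: funext => h; rewrite sign_sum_at ?wj0 ?ee //; exact: wv.
  have -> : sign_sum (flip_at j0 s) w = fun h => a s h - e * phi (e * (e * v h j0)).
    apply: funext => h.
    by rewrite sign_sum_at ?a_flip ?wj0 ?ee ?rsign_flip_at ?mulNr //; exact: wv.
  have -> : sign_sum s v = fun h => a s h + e * v h j0.
    by apply: funext => h; rewrite sign_sum_at.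
  have -> : sign_sum (flip_at j0 s) v = fun h => a s h - e * v h j0.
    by apply: funext => h; rewrite sign_sum_at // a_flip rsign_flip_at mulNr.
  by [].
have : \sum_(s : signs) (sup_on (sign_sum s w) + sup_on (sign_sum (flip_at j0 s) w))
    <= \sum_(s : signs) (sup_on (sign_sum s v) + sup_on (sign_sum (flip_at j0 s) v)).
  by apply: ler_sum => s _; exact: pair.
rewrite !big_split /=.
rewrite (@sum_flip_at _ _ j0 (fun s => sup_on (sign_sum s w))).
rewrite (@sum_flip_at _ _ j0 (fun s => sup_on (sign_sum s v))).
rewrite /radsum; lra.
Qed.

Lemma radsum_contract phi v : 1.-lipschitz phi -> bounded_family v ->
  radsum (fun h j => phi (v h j)) <= radsum v.
Proof.
move=> L bv; pose u k h (j : 'I_n) := if (j < k)%N then phi (v h j) else v h j.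
have bu k : bounded_family (u k).
  have [[K1 H1] [K2 H2]] := (bv, bounded_family_lipschitz L bv).
  exists (K1 + K2) => h Ah j; have := H1 h Ah j; have := H2 h Ah j.
  have := normr_ge0 (v h j); have := normr_ge0 (phi (v h j)).
  by rewrite /u; case: ifP => _; lra.
have step k (kn : (k < n)%N) : radsum (u k.+1) <= radsum (u k).
  apply: (@radsum_contract_at _ (Ordinal kn) _ _ L (bu k)) => [h j jk|h].
    rewrite /u ltnS leq_eqVlt; suff /negbTE -> : (j : nat) != k by [].
    by apply: contraNneq jk => jk; apply/eqP/val_inj.
  by rewrite /u /= ltnSn ltnn.
have le_v k : (k <= n)%N -> radsum (u k) <= radsum v.
  elim: k => [|k IH] kn.
    suff -> : u 0%N = v by [].
    by do 2 (apply: funext => ?); rewrite /u ltn0.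
  exact: le_trans (step k kn) (IH (ltnW kn)).
suff -> : (fun h j => phi (v h j)) = u n by exact: le_v.
by do 2 (apply: funext => ?); rewrite /u ltn_ord.
Qed.

Lemma radsum_max v w : bounded_family v -> bounded_family w ->
  radsum (fun h j => Num.max (v h j) (w h j)) <= radsum v + radsum w.
Proof.
move=> bv bw.
have maxE (x y : R) : Num.max x y = 2^-1 * ((x + y) + `|x - y|).
  case: (leP x y) => xy.
    by rewrite ler0_norm ?subr_le0 //; lra.
  by rewrite ger0_norm ?subr_ge0 ?ltW //; lra.
rewrite (_ : (fun h j => _)
    = fun h j => 2^-1 * ((v h j + w h j) + `|v h j - w h j|)); last first.
  by do 2 (apply: funext => ?); rewrite maxE.
have bD := bounded_familyD bv bw.
have bB := bounded_familyD bv (bounded_familyN bw).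
have bA := bounded_family_lipschitz (@lipschitz_normr R) bB.
have h2 : 0 <= (2 : R)^-1 by rewrite invr_ge0 ler0n.
have := radsumZ h2 (bounded_familyD bD bA).
have := radsumD bD bA; have := radsumD bv bw; have := radsumD bv (bounded_familyN bw).
have := radsum_contract (@lipschitz_normr R) bB; have := radsumN w.
simpl; lra.
Qed.

Section BigMax.
Variables (v : nat -> T -> 'I_n -> R) (i0 : nat).
Hypothesis bv0 : bounded_family (v i0).

Let bigmax_cons i r : (fun h j => \big[Num.max/v i0 h j]_(k <- i :: r) v k h j)
  = fun h j => Num.max (v i h j) (\big[Num.max/v i0 h j]_(k <- r) v k h j).
Proof. by do 2 (apply: funext => ?); rewrite big_cons. Qed.

Let bigmax_nil : (fun h j => \big[Num.max/v i0 h j]_(k <- [::]) v k h j) = v i0.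
Proof. by do 2 (apply: funext => ?); rewrite big_nil. Qed.

Lemma bounded_family_bigmax r : (forall i, i \in r -> bounded_family (v i)) ->
  bounded_family (fun h j => \big[Num.max/v i0 h j]_(k <- r) v k h j).
Proof.
elim: r => [|i r IH] br; first by rewrite bigmax_nil.
rewrite bigmax_cons; apply: bounded_family_max; first by apply: br; rewrite inE eqxx.
by apply: IH => k kr; apply: br; rewrite inE kr orbT.
Qed.

Lemma radsum_bigmax r : (forall i, i \in r -> bounded_family (v i)) ->
  radsum (fun h j => \big[Num.max/v i0 h j]_(k <- r) v k h j)
  <= radsum (v i0) + \sum_(k <- r) radsum (v k).
Proof.
elim: r => [|i r IH] br; first by rewrite bigmax_nil big_nil addr0.
have bi : bounded_family (v i) by apply: br; rewrite inE eqxx.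
have br' k : k \in r -> bounded_family (v k) by move=> kr; apply: br; rewrite inE kr orbT.
rewrite bigmax_cons big_cons (le_trans (radsum_max bi (bounded_family_bigmax br'))) //.
by rewrite addrCA lerD2l IH.
Qed.

End BigMax.

Lemma abs_sign_sum_le s v h : bounded_family v -> A h ->
  `|sign_sum s v h| <= sup_on (sign_sum s v)
     + sup_on (sign_sum s (fun h j => - v h j)) + `|sign_sum s v h0|.
Proof.
move=> bv Ah.
have bz := bounded_sign_sum s bv; have bnz := bounded_sign_sum s (bounded_familyN bv).
have := sup_on_ub bz Ah; have := sup_on_ub bz Ah0.
have := sup_on_ub bnz Ah; have := sup_on_ub bnz Ah0; rewrite !sign_sumN.
have := ler_norm (sign_sum s v h0); have := ler_norm (- sign_sum s v h0); rewrite normrN.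
case: (lerP 0 (sign_sum s v h)) => z0.
  by rewrite (ger0_norm z0); lra.
by rewrite (ltr0_norm z0); lra.
Qed.

End RademacherSum.

Definition qform (R : numDomainType) (T : Type) (I : finType)
    (K : T -> T -> R) (p : I -> T) (a : I -> R) : R :=
  \sum_i \sum_j a i * a j * K (p i) (p j).

Definition psd_on (R : numDomainType) (T : Type) (X : set T) (K : T -> T -> R) :=
  forall (I : finType) (p : I -> T) (a : I -> R), (forall i, X (p i)) -> 0 <= qform K p a.

Lemma quadratic_ge0_discr (R : realFieldType) (a b c : R) : 0 <= b ->
  (forall t, 0 <= a + 2 * t * c + t ^+ 2 * b) -> c ^+ 2 <= a * b.
Proof.
move=> b0 H; have [b_eq0|b_neq0] := eqVneq b 0.
  have [->|c0] := eqVneq c 0; first by rewrite expr0n /= b_eq0 mulr0.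
  have := H (- (a + 1) / (2 * c)).
  have -> : a + 2 * (- (a + 1) / (2 * c)) * c + (- (a + 1) / (2 * c)) ^+ 2 * b = -1.
    by rewrite b_eq0; field.
  lra.
have := H (- c / b).
have -> : a + 2 * (- c / b) * c + (- c / b) ^+ 2 * b = a - c ^+ 2 / b by field.
by rewrite subr_ge0 ler_pdivrMr // lt0r b_neq0.
Qed.

Lemma psd_cauchy_schwarz (R : realFieldType) (T : Type) (X : set T) (K : T -> T -> R)
    (I J : finType) (p : I -> T) (q : J -> T) (a : I -> R) (b : J -> R) :
  (forall x t, K x t = K t x) -> psd_on X K ->
  (forall i, X (p i)) -> (forall j, X (q j)) ->
  (\sum_i \sum_j a i * b j * K (p i) (q j)) ^+ 2 <= qform K p a * qform K q b.
Proof.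
move=> Ksym Kpsd Xp Xq; apply: quadratic_ge0_discr => [|t]; first exact: Kpsd.
(* the quadratic form of the concatenated family (p, q) with weights (a, t b) *)
pose pq (z : I + J) := match z with inl i => p i | inr j => q j end.
pose ab (z : I + J) := match z with inl i => a i | inr j => t * b j end.
set c := \sum_i _; set A := qform K p a; set B := qform K q b.
suff -> : A + 2 * t * c + t ^+ 2 * B = qform K pq ab by apply: Kpsd => -[].
have cross : \sum_j \sum_i t * b j * a i * K (q j) (p i) = t * c.
  rewrite /c exchange_big mulr_sumr; apply: eq_bigr => i _; rewrite mulr_sumr.
  by apply: eq_bigr => j _; rewrite Ksym; ring.
have cross' : \sum_i \sum_j a i * (t * b j) * K (p i) (q j) = t * c.
  rewrite /c mulr_sumr; apply: eq_bigr => i _; rewrite mulr_sumr.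
  by apply: eq_bigr => j _; ring.
have diag : \sum_j \sum_j' t * b j * (t * b j') * K (q j) (q j') = t ^+ 2 * B.
  rewrite /B /qform mulr_sumr; apply: eq_bigr => j _; rewrite mulr_sumr.
  by apply: eq_bigr => j' _; ring.
rewrite /qform big_sumType /=; under eq_bigr do rewrite big_sumType /=.
under [X in _ = _ + X]eq_bigr do rewrite big_sumType /=.
by rewrite !big_split /= cross cross' diag /A /qform; ring.
Qed.

Section SeriesKernel.
Variables (R : realType) (T : Type) (X : set T).
Variables (Q : pred nat) (mu : nat -> R) (phi : nat -> T -> R) (r : R).
Hypothesis mu_ge0 : forall k, Q k -> 0 <= mu k.
Hypothesis diag_le : forall x, X x ->
  (\sum_(k <oo | Q k) (mu k * phi k x ^+ 2)%:E <= r%:E)%E.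

Definition series_kernel x t :=
  limn (fun N => \sum_(k < N | Q k) mu k * phi k x * phi k t).

Let term x t k := if Q k then mu k * phi k x * phi k t else 0.

Let partial_sumE x t N :
  \sum_(k < N | Q k) mu k * phi k x * phi k t = series (term x t) N.
Proof. by rewrite /series /= big_mkord big_mkcond. Qed.

Let partial_sumsE x t : (fun N => \sum_(k < N | Q k) mu k * phi k x * phi k t)
  = series (term x t).
Proof. by apply: funext => N; exact: partial_sumE. Qed.

Let term_diag_ge0 x k : 0 <= term x x k.
Proof.
by rewrite /term; case: ifP => Qk //; rewrite -mulrA -expr2 mulr_ge0 ?mu_ge0 ?sqr_ge0.
Qed.

Let partial_diag_le x N : X x -> series (term x x) N <= r.
Proof.
move=> Xx; rewrite -partial_sumE -lee_fin -sumEFin.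
under eq_bigr do rewrite -mulrA -expr2.
rewrite -(big_mkord Q (fun k => (mu k * phi k x ^+ 2)%:E)).
apply: le_trans (diag_le Xx); apply: nneseries_lim_ge => k _ Qk.
by rewrite lee_fin mulr_ge0 ?mu_ge0 ?sqr_ge0.
Qed.

Let term_abs_le x t k : `|term x t k| <= (term x x k + term t t k) / 2.
Proof.
rewrite /term; case: ifP => Qk; last by rewrite normr0 !addr0 mul0r.
rewrite -mulrA normrM ger0_norm ?mu_ge0 // -!mulrA -mulrDr -mulrA ler_wpM2l ?mu_ge0 //.
rewrite normrM -!expr2 -(real_normK (num_real (phi k x))).
rewrite -(real_normK (num_real (phi k t))).
by move: `|phi k x| `|phi k t| => u v; have := sqr_ge0 (u - v); nra.
Qed.

Lemma cvg_series_kernel x t : X x -> X t ->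
  (fun N => \sum_(k < N | Q k) mu k * phi k x * phi k t) @ \oo --> series_kernel x t.
Proof.
move=> Xx Xt; rewrite /series_kernel partial_sumsE.
apply: normed_cvg; apply: nondecreasing_is_cvgn.
  by apply: nondecreasing_series => k _ _; exact: normr_ge0.
exists r => _ [N _ <-]; rewrite /series /=.
apply: le_trans (ler_sum _ (fun k _ => term_abs_le x t k)) _.
rewrite -mulr_suml big_split /=.
by have := partial_diag_le N Xx; have := partial_diag_le N Xt; rewrite /series /=; lra.
Qed.

Lemma series_kernelC x t : series_kernel x t = series_kernel t x.
Proof.
rewrite /series_kernel; congr (lim (_ @ \oo)); apply: funext => N.
by apply: eq_bigr => k _; rewrite mulrAC.
Qed.

Lemma series_kernel_diag_le x : X x -> series_kernel x x <= r.
Proof.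
move=> Xx; apply: (cvgr_to_le (cvg_series_kernel Xx Xx)).
by apply: nearW => N /=; rewrite partial_sumE; exact: partial_diag_le.
Qed.

Lemma series_kernel_diag_ge0 x : X x -> 0 <= series_kernel x x.
Proof.
move=> Xx; apply: (cvgr_to_ge (cvg_series_kernel Xx Xx)).
by apply: nearW => N /=; rewrite partial_sumE /series /= sumr_ge0.
Qed.

Lemma series_kernel_psd : psd_on X series_kernel.
Proof.
move=> I p a Xp.
have Hc : (fun N => \sum_i \sum_j a i * a j * series (term (p i) (p j)) N) @ \oo
    --> qform series_kernel p a.
  apply: cvg_big => [|i _]; first exact: add_continuous.
  apply: cvg_big => [|j _]; first exact: add_continuous.
  by apply: cvgMr; rewrite -partial_sumsE; exact: cvg_series_kernel.
apply: (cvgr_to_ge Hc); apply: nearW => N /=.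
have -> : \sum_i \sum_j a i * a j * series (term (p i) (p j)) N
    = \sum_(0 <= k < N | Q k) mu k * (\sum_i a i * phi k (p i)) ^+ 2.
  rewrite [RHS]big_mkcond /series /=.
  under eq_bigr do under eq_bigr do rewrite mulr_sumr.
  under eq_bigr do rewrite exchange_big /=.
  rewrite exchange_big /=; apply: eq_bigr => k _; rewrite /term.
  case: ifP => Qk; last by rewrite !big1 // => i _; rewrite big1 // => j _; rewrite mulr0.
  rewrite expr2 mulr_suml mulr_sumr; apply: eq_bigr => i _.
  by rewrite !mulr_sumr; apply: eq_bigr => j _; ring.
by rewrite sumr_ge0 // => k Qk; rewrite mulr_ge0 ?mu_ge0 ?sqr_ge0.
Qed.

End SeriesKernel.

Definition bounded_psd_kernel (R : realType) (T : Type) (X : set T)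
    (K : T -> T -> R) (r : R) :=
  [/\ forall x t, K x t = K t x, psd_on X K & forall x, X x -> 0 <= K x x <= r].

Lemma series_kernel_bounded_psd (R : realType) (T : Type) (X : set T)
    (Q : pred nat) (mu : nat -> R) (phi : nat -> T -> R) (r : R) :
  (forall k, Q k -> 0 <= mu k) ->
  (forall x, X x -> (\sum_(k <oo | Q k) (mu k * phi k x ^+ 2)%:E <= r%:E)%E) ->
  bounded_psd_kernel X (series_kernel Q mu phi) r.
Proof.
move=> mu0 diag; split; [exact: series_kernelC | exact: series_kernel_psd mu0 diag |].
move=> x Xx.
by rewrite (series_kernel_diag_ge0 mu0 diag) ?(series_kernel_diag_le mu0 diag).
Qed.

Section EigenExpansion.
Variables (R : realType) (d : nat) (X : set (d.-tuple R)).
Variables (lam : nat -> R) (phi : nat -> d.-tuple R -> R) (r : R).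
Hypothesis Splus_diag_le : forall x, X x -> (Splus_diag lam phi x <= r%:E)%E.
Hypothesis Sminus_diag_le : forall x, X x -> (Sminus_diag lam phi x <= r%:E)%E.

Lemma Splus_bounded_psd : bounded_psd_kernel X (Splus lam phi) r.
Proof. exact: (series_kernel_bounded_psd (Q := fun k => 0 <= lam k)). Qed.

Lemma Sminus_bounded_psd : bounded_psd_kernel X (Sminus lam phi) r.
Proof.
by apply: (series_kernel_bounded_psd (Q := fun k => lam k < 0) (mu := fun k => `|lam k|)).
Qed.

Lemma Splus_sub_Sminus (S : d.-tuple R -> d.-tuple R -> R) x t : X x -> X t ->
  (fun N => \sum_(k < N) lam k * phi k x * phi k t) @ \oo --> S x t ->
  S x t = Splus lam phi x t - Sminus lam phi x t.
Proof.
move=> Xx Xt HS.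
have E : (fun N => \sum_(k < N) lam k * phi k x * phi k t)
    = (fun N => \sum_(k < N | 0 <= lam k) lam k * phi k x * phi k t
              - \sum_(k < N | lam k < 0) `|lam k| * phi k x * phi k t).
  apply: funext => N; rewrite [LHS](bigID (fun k : 'I_N => 0 <= lam k)) /=; congr (_ + _).
  rewrite -sumrN; apply: eq_big => k; first by rewrite ltNge.
  rewrite -ltNge => lam0.
  by rewrite ltr0_norm // !mulNr opprK.
rewrite E in HS; apply: (cvg_unique (@Rhausdorff R) HS); apply: cvgB.
  exact: (cvg_series_kernel (Q := fun k => 0 <= lam k) (fun k lk => lk)
    Splus_diag_le Xx Xt).
exact: (cvg_series_kernel (Q := fun k => lam k < 0) (mu := fun k => `|lam k|)
  (fun k _ => normr_ge0 (lam k)) Sminus_diag_le Xx Xt).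
Qed.

End EigenExpansion.

Section KernelClass.
Variables (R : realType) (T : Type) (X : set T).
Variables (N : nat) (xs : 'I_N -> T) (ys : 'I_N -> nat) (c : nat).
Hypothesis Xxs : forall i, X (xs i).

Lemma OmegaE (K : T -> T -> R) (a : 'I_N -> R) :
  Omega K xs ys c a = \sum_(1 <= y < c.+1) qform K xs (alpha_cls ys a y).
Proof.
apply: eq_bigr => y _; apply: eq_bigr => i _; apply: eq_bigr => j _.
by rewrite mulrAC.
Qed.

Lemma qform_le_Omega (K : T -> T -> R) (a : 'I_N -> R) y :
  psd_on X K -> (1 <= y <= c)%N ->
  qform K xs (alpha_cls ys a y) <= Omega K xs ys c a.
Proof.
move=> Kpsd yc; rewrite OmegaE (bigD1_seq y) ?iota_uniq ?mem_index_iota ?ltnS //=.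
by rewrite lerDl sumr_ge0 // => y' _; exact: Kpsd.
Qed.

Lemma Omega_cross_le (K : T -> T -> R) (B : R) (a : 'I_N -> R) y
    (J : finType) (u : J -> T) (b : J -> R) :
  (forall x t, K x t = K t x) -> psd_on X K -> 0 <= B -> (1 <= y <= c)%N ->
  Omega K xs ys c a <= B ^+ 2 -> (forall j, X (u j)) ->
  `|\sum_j \sum_i b j * alpha_cls ys a y i * K (u j) (xs i)|
  <= B * Num.sqrt (qform K u b).
Proof.
move=> Ksym Kpsd B0 yc OmB Xu.
have CS := psd_cauchy_schwarz b (alpha_cls ys a y) Ksym Kpsd Xu Xxs.
have Qa := le_trans (qform_le_Omega a Kpsd yc) OmB.
have Bq0 : 0 <= B * Num.sqrt (qform K u b) by rewrite mulr_ge0 ?sqrtr_ge0.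
rewrite -(ger0_norm Bq0) -ler_sqr ?nnegrE // !real_normK ?num_real //.
rewrite exprMn sqr_sqrtr ?Kpsd // mulrC (le_trans CS) //.
by rewrite ler_wpM2l ?Kpsd.
Qed.

Variables (S Kp Km : T -> T -> R) (Bp Bm : R).
Hypotheses (Bp0 : 0 <= Bp) (Bm0 : 0 <= Bm).
Hypotheses (Kp_sym : forall x t, Kp x t = Kp t x) (Kp_psd : psd_on X Kp).
Hypotheses (Km_sym : forall x t, Km x t = Km t x) (Km_psd : psd_on X Km).
Hypothesis S_decomp : forall x t, X x -> X t -> S x t = Kp x t - Km x t.

Lemma HSy_weighted_sum_le y h (J : finType) (u : J -> T) (b : J -> R) :
  (1 <= y <= c)%N -> HSy S Kp Km Bp Bm xs ys c y h -> (forall j, X (u j)) ->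
  `|\sum_j b j * h (u j)|
  <= Bp * Num.sqrt (qform Kp u b) + Bm * Num.sqrt (qform Km u b).
Proof.
move=> yc [a [_ _ Op Om ->]] Xu.
have -> : \sum_j b j * (\sum_(i | ys i == y) a i * S (u j) (xs i))
    = \sum_j \sum_i b j * alpha_cls ys a y i * Kp (u j) (xs i)
      - \sum_j \sum_i b j * alpha_cls ys a y i * Km (u j) (xs i).
  rewrite -sumrB; apply: eq_bigr => j _; rewrite -sumrB big_mkcond mulr_sumr.
  apply: eq_bigr => i _; rewrite /alpha_cls; case: (ys i == y).
    by rewrite S_decomp // mulrA mulrBr.
  by rewrite !mulr0 !mul0r subr0.
rewrite (le_trans (ler_normB _ _)) // lerD //; exact: Omega_cross_le.
Qed.

End KernelClass.

Lemma exists_other_label c y : (2 <= c)%N -> (1 <= y <= c)%N ->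
  exists2 y0, (1 <= y0 <= c)%N & y0 != y.
Proof.
move=> c2 _; exists (if y == 1%N then 2 else 1).
  by case: ifP => _ /=; [exact: c2 | exact: ltnW].
by case: (eqVneq y 1%N) => [->|y1] //; rewrite eq_sym.
Qed.

Section MaxOther.
Variables (R : realType) (g : nat -> R) (c y : nat).

Let other_max := (\big[Order.max/-oo%E]_(1 <= y' < c.+1 | y' != y) (g y')%:E)%E.

Let other_max_fin y0 : (1 <= y0 <= c)%N -> y0 != y -> other_max \is a fin_num.
Proof.
move=> y0c y0y; have y0_in : y0 \in index_iota 1 c.+1 by rewrite mem_index_iota ltnS.
rewrite fin_numE; apply/andP; split.
  rewrite gt_eqF // (lt_le_trans (ltNyr (g y0))) //.
  exact: (le_bigmax_seq _ _ _ _ y0_in y0y).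
rewrite lt_eqF // (@le_lt_trans _ _ (\sum_(1 <= y' < c.+1) `|g y'|)%:E) ?ltry //.
rewrite /other_max big_seq_cond; apply: bigmax_le; first exact: leNye.
move=> y' /andP[y'_in _].
rewrite lee_fin (le_trans (ler_norm _)) // (bigD1_seq y') ?iota_uniq //=.
by rewrite lerDl sumr_ge0.
Qed.

Lemma max_other_ge y' : (1 <= y' <= c)%N -> y' != y -> g y' <= max_other g c y.
Proof.
move=> y'c y'y; rewrite -lee_fin /max_other fineK ?(other_max_fin y'c y'y) //.
have y'_in : y' \in index_iota 1 c.+1 by rewrite mem_index_iota ltnS.
exact: (le_bigmax_seq _ _ _ _ y'_in y'y).
Qed.

Lemma max_other_le M y0 : (1 <= y0 <= c)%N -> y0 != y ->
  (forall y', (1 <= y' <= c)%N -> y' != y -> g y' <= M) -> max_other g c y <= M.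
Proof.
move=> y0c y0y gM; rewrite -lee_fin /max_other fineK ?(other_max_fin y0c y0y) //.
rewrite big_nat_cond; apply: bigmax_le; first exact: leNye.
move=> y' /andP[/andP[y'1 y'c] y'y].
by rewrite lee_fin gM // y'1 -ltnS.
Qed.

End MaxOther.

Lemma max_other_two (R : realType) (g : nat -> R) y : (1 <= y <= 2)%N ->
  max_other g 2 y = g (3 - y)%N.
Proof.
move=> y12; have other : (1 <= 3 - y <= 2)%N && (3 - y != y)%N.
  by case/andP: y12; case: y => [|[|[|]]].
case/andP: other => oc oy; apply/le_anti; rewrite max_other_ge // andbT.
apply: max_other_le oc oy _ => y' y'c y'y.
suff -> : y' = (3 - y)%N by [].
by move: y12 y'c y'y; case: y => [|[|[|]]] //; case: y' => [|[|[|]]].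
Qed.

Lemma max_other_abs_le (R : realType) (g : nat -> R) c y (M : R) :
  (2 <= c)%N -> (1 <= y <= c)%N -> (forall y', (1 <= y' <= c)%N -> `|g y'| <= M) ->
  `|max_other g c y| <= M.
Proof.
move=> c2 yc gM; have [y0 y0c y0y] := exists_other_label c2 yc.
rewrite ler_norml (max_other_le y0c y0y) ?andbT => [|y' y'c _]; last first.
  exact: le_trans (ler_norm _) (gM _ y'c).
apply: le_trans (max_other_ge g y0c y0y).
by rewrite lerNl (le_trans (ler_norm _)) // normrN gM.
Qed.

Lemma max_other_penalized (R : realType) (g : nat -> R) c y (M L : R) :
  (2 <= c)%N -> (1 <= y <= c)%N -> (forall y', (1 <= y' <= c)%N -> `|g y'| <= M) ->
  2 * M <= L ->
  max_other g c y
  = \big[Num.max/g 1%N - L * (1%N == y)%:R]_(2 <= y' < c.+1) (g y' - L * (y' == y)%:R).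
Proof.
move=> c2 yc gM LM; have [y0 y0c y0y] := exists_other_label c2 yc.
have pen_le y' : (1 <= y' <= c)%N -> g y' - L * (y' == y)%:R <= max_other g c y.
  move=> y'c; have [->|y'y] := eqVneq y' y; last by rewrite mulr0 subr0 max_other_ge.
  have := max_other_ge g y0c y0y; have := gM _ y0c; have := gM _ yc.
  rewrite mulr1 => /ler_normlP[? ?] /ler_normlP[? ?]; lra.
apply/le_anti/andP; split.
  apply: (max_other_le y0c y0y) => y' /andP[y'1 y'c] y'y.
  have -> : g y' = g y' - L * (y' == y)%:R by rewrite (negbTE y'y) mulr0 subr0.
  have [->|y'_ne1] := eqVneq y' 1%N; first exact: bigmax_ge_id.
  have y'_in : y' \in index_iota 2 c.+1.
    by rewrite mem_index_iota ltnS y'c ltn_neqAle eq_sym y'_ne1 y'1.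
  exact: (bigmax_sup_seq _ _ _ _ _ y'_in isT (lexx _)).
rewrite big_nat_cond; apply: bigmax_le; first by apply: pen_le; rewrite (leq_trans _ c2).
move=> y' /andP[/andP[y'2 y'c] _].
by apply: pen_le; rewrite (leq_trans _ y'2) // -ltnS.
Qed.

Section MarginRademacher.
Variables (R : realType) (T : Type) (X : set T) (S Kp Km : T -> T -> R) (r : R).
Hypothesis r0 : 0 <= r.
Hypotheses (Kp_sym : forall x t, Kp x t = Kp t x) (Kp_psd : psd_on X Kp).
Hypotheses (Km_sym : forall x t, Km x t = Km t x) (Km_psd : psd_on X Km).
Hypotheses (Kp_diag : forall x, X x -> 0 <= Kp x x <= r ^+ 2).
Hypotheses (Km_diag : forall x, X x -> 0 <= Km x x <= r ^+ 2).
Hypothesis S_decomp : forall x t, X x -> X t -> S x t = Kp x t - Km x t.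
Variables (N : nat) (xs : 'I_N -> T) (ys : 'I_N -> nat) (c : nat) (Bp Bm : R).
Hypotheses (Xxs : forall i, X (xs i)) (Bp0 : 0 <= Bp) (Bm0 : 0 <= Bm).
Variables (n : nat) (u : 'I_n -> T) (l : 'I_n -> nat).
Hypotheses (Xu : forall j, X (u j)) (lc : forall j, (1 <= l j <= c)%N).
Local Notation signs := {ffun 'I_n -> bool}.

Let HSy_le := HSy_weighted_sum_le (ys := ys) (c := c) Xxs Bp0 Bm0
  Kp_sym Kp_psd Km_sym Km_psd S_decomp.

Let classes : set (nat -> T -> R) :=
  [set h | forall y, (1 <= y <= c)%N -> HSy S Kp Km Bp Bm xs ys c y (h y)].
Let M := (Bp + Bm) * r.
Let X0 := (2 ^ n)%:R * (M * Num.sqrt n%:R).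

Let M_ge0 : 0 <= M. Proof. by rewrite mulr_ge0 ?addr_ge0. Qed.

Lemma HSy_abs_le y h x : (1 <= y <= c)%N -> HSy S Kp Km Bp Bm xs ys c y h -> X x ->
  `|h x| <= (Bp + Bm) * r.
Proof.
move=> yc Hh Xx; have := @HSy_le y h 'I_1 (fun _ => x) (fun _ => 1) yc Hh (fun _ => Xx).
rewrite big_ord1 mul1r /qform !big_ord1 !mul1r => /le_trans; apply.
have sqrt_le K : 0 <= K <= r ^+ 2 -> Num.sqrt K <= r.
  by case/andP=> K0 Kr; rewrite -[leRHS]ger0_norm // -sqrtr_sqr ler_sqrt ?sqr_ge0.
by rewrite mulrDl lerD // ler_wpM2l // sqrt_le // ?Kp_diag ?Km_diag.
Qed.

Definition class_bound (w : 'I_n -> R) (s : signs) :=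
  Bp * Num.sqrt (qform Kp u (fun j => rsign R s j * w j))
  + Bm * Num.sqrt (qform Km u (fun j => rsign R s j * w j)).

Lemma class_bound_ge0 w s : 0 <= class_bound w s.
Proof. by rewrite addr_ge0 // mulr_ge0 ?sqrtr_ge0. Qed.

Lemma sign_sum_class_le y w h s : (1 <= y <= c)%N ->
  HSy S Kp Km Bp Bm xs ys c y h ->
  `|\sum_j rsign R s j * (w j * h (u j))| <= class_bound w s.
Proof.
move=> yc Hh; under eq_bigr do rewrite mulrA.
exact: (@HSy_le y h _ u (fun j => rsign R s j * w j) yc Hh Xu).
Qed.

Lemma sum_class_bound_le w : (forall j, `|w j| <= 1) -> \sum_s class_bound w s <= X0.
Proof.
move=> w1.
have sum_sqrt_le K : psd_on X K -> (forall x, X x -> 0 <= K x x <= r ^+ 2) ->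
    \sum_s Num.sqrt (qform K u (fun j => rsign R s j * w j))
    <= (2 ^ n)%:R * (r * Num.sqrt n%:R).
  move=> Kpsd Kdiag.
  have qE s : qform K u (fun j => rsign R s j * w j)
      = \sum_j \sum_k rsign R s j * rsign R s k * (w j * w k * K (u j) (u k)).
    by apply: eq_bigr => j _; apply: eq_bigr => k _; ring.
  under eq_bigr do rewrite qE.
  apply: sum_sqrt_rsign_quad_le => // [s|j]; first by rewrite -qE Kpsd.
  have /andP[K0 Kr] := Kdiag _ (Xu j).
  rewrite -expr2 -(real_normK (num_real (w j))) -[leRHS]mul1r ler_pM //.
  by rewrite expr_le1 ?w1.
rewrite /class_bound big_split /= -!mulr_sumr.
have -> : X0 = Bp * ((2 ^ n)%:R * (r * Num.sqrt n%:R))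
              + Bm * ((2 ^ n)%:R * (r * Num.sqrt n%:R)) by rewrite /X0 /M; ring.
by rewrite lerD // ler_wpM2l // sum_sqrt_le.
Qed.

Lemma sign_sum_classes_le (W : nat -> 'I_n -> R) h s : classes h ->
  `|\sum_j rsign R s j * \sum_(1 <= y < c.+1) W y j * h y (u j)|
  <= \sum_(1 <= y < c.+1) class_bound (W y) s.
Proof.
move=> Hh; under eq_bigr do rewrite mulr_sumr.
rewrite exchange_big /= (le_trans (ler_norm_sum _ _ _)) //.
rewrite [leLHS]big_nat_cond [leRHS]big_nat_cond; apply: ler_sum => y /andP[yc _].
by apply: sign_sum_class_le (Hh y _); rewrite -ltnS.
Qed.

Lemma sum_classes_le (W : nat -> 'I_n -> R) : (forall y j, `|W y j| <= 1) ->
  \sum_s \sum_(1 <= y < c.+1) class_bound (W y) s <= c%:R * X0.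
Proof.
move=> W1; rewrite exchange_big /=.
apply: le_trans (_ : _ <= \sum_(1 <= y < c.+1) X0) _.
  by apply: ler_sum => y _; exact: sum_class_bound_le.
by rewrite sumr_const_nat subn1 mulr_natl.
Qed.

Let margin (h : nat -> T -> R) (j : 'I_n) :=
  h (l j) (u j) - max_other (fun y' => h y' (u j)) c (l j).

Lemma sign_sum_margin_two h s : c = 2%N -> classes h ->
  `|\sum_j rsign R s j * margin h j|
  <= \sum_(1 <= y < c.+1) class_bound (fun j => if l j == y then 1 else -1) s.
Proof.
move=> c2 Hh; apply: le_trans (sign_sum_classes_le _ s Hh).
(* with two labels the margin is linear in h *)
suff -> : margin h
    = fun j => \sum_(1 <= y < c.+1) (if l j == y then 1 else -1) * h y (u j) by [].
apply: funext => j; have lj := lc j; rewrite c2 in lj.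
rewrite /margin c2 max_other_two // big_ltn // big_nat1.
by move: lj; case: (l j) => [|[|[|k]]] // _; rewrite !subSS subn0 /=; ring.
Qed.

Section ManyLabels.
Hypothesis c2 : (2 <= c)%N.
Variable h0 : nat -> T -> R.
Hypothesis Ah0 : classes h0.

Let L := 2 * M.
Let pen y (h : nat -> T -> R) (j : 'I_n) := h y (u j) - L * (y == l j)%:R.
Let pmax (h : nat -> T -> R) (j : 'I_n) :=
  \big[Num.max/pen 1%N h j]_(2 <= y < c.+1) pen y h j.

Let pmaxE h j : classes h -> pmax h j = max_other (fun y' => h y' (u j)) c (l j).
Proof.
move=> Hh; rewrite (max_other_penalized (M := M) (L := L) c2 (lc j)) ?lexx // => y yc.
exact: HSy_abs_le yc (Hh y yc) (Xu j).
Qed.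

Let pen_bounded y : (1 <= y <= c)%N -> bounded_family classes (pen y).
Proof.
move=> yc; exists (M + L) => h Hh j; rewrite (le_trans (ler_normB _ _)) //.
have L0 : 0 <= L by rewrite mulr_ge0.
rewrite lerD ?(HSy_abs_le yc (Hh y yc) (Xu j)) // normrM (ger0_norm L0) ler_piMr //.
by case: (y == l j); rewrite ?normr1 ?normr0.
Qed.

Let pmax_bounded : bounded_family classes pmax.
Proof.
apply: bounded_family_bigmax; first by apply: pen_bounded; rewrite (ltnW c2).
move=> y; rewrite mem_index_iota => /andP[y2 yc].
by apply: pen_bounded; rewrite (ltnW y2) -ltnS.
Qed.

Let radsum_pen_le y : (1 <= y <= c)%N -> radsum classes (pen y) <= X0.
Proof.
move=> yc; have bh : bounded_family classes (fun h j => h y (u j)).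
  by exists M => h Hh j; exact: HSy_abs_le yc (Hh y yc) (Xu j).
apply: le_trans (radsum_shift Ah0 (fun j => - (L * (y == l j)%:R)) bh) _.
apply: le_trans (sum_class_bound_le (w := fun _ => 1) _) => [|j]; last by rewrite normr1.
apply: ler_sum => s _; apply: (sup_on_le Ah0) => h Hh.
apply: le_trans (ler_norm _) _; rewrite /sign_sum.
under eq_bigr do rewrite -[h y _]mul1r.
exact: sign_sum_class_le (Hh y yc).
Qed.

Let radsum_pmax_le : radsum classes pmax <= c%:R * X0.
Proof.
have b1 : (1 <= 1 <= c)%N by rewrite (ltnW c2).
have bys y : y \in index_iota 2 c.+1 -> bounded_family classes (pen y).
  rewrite mem_index_iota => /andP[y2 yc].
  by apply: pen_bounded; rewrite (ltnW y2) -ltnS.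
apply: le_trans (radsum_bigmax Ah0 (pen_bounded b1) bys) _.
apply: le_trans (_ : _ <= X0 + \sum_(2 <= y < c.+1) X0) _.
  rewrite lerD ?radsum_pen_le // big_seq [leRHS]big_seq ler_sum // => y y_in.
  move: y_in; rewrite mem_index_iota => /andP[y2 yc].
  by apply: radsum_pen_le; rewrite (ltnW y2) -ltnS.
by rewrite sumr_const_nat subSS subn1 -mulrS prednK ?mulr_natl // ltnW.
Qed.

Definition margin_dominator s :=
  \sum_(1 <= y < c.+1) class_bound (fun j => (l j == y)%:R) s
  + (sup_on classes (sign_sum s pmax)
     + sup_on classes (sign_sum s (fun h j => - pmax h j)) + `|sign_sum s pmax h0|).

Lemma margin_dominator_ge0 s : 0 <= margin_dominator s.
Proof.
rewrite addr_ge0 ?sumr_ge0 // => [y _|]; first exact: class_bound_ge0.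
have := sup_on_ub (bounded_sign_sum s pmax_bounded) Ah0.
have := sup_on_ub (bounded_sign_sum s (bounded_familyN pmax_bounded)) Ah0.
by rewrite sign_sumN; have := normr_ge0 (sign_sum s pmax h0); lra.
Qed.

Lemma sign_sum_margin_le h s : classes h ->
  `|\sum_j rsign R s j * margin h j| <= margin_dominator s.
Proof.
move=> Hh.
have -> : \sum_j rsign R s j * margin h j
    = \sum_j rsign R s j * \sum_(1 <= y < c.+1) (l j == y)%:R * h y (u j)
      - sign_sum s pmax h.
  rewrite /sign_sum -sumrB; apply: eq_bigr => j _; rewrite -mulrBr /margin pmaxE //.
  rewrite (bigD1_seq (l j)) ?iota_uniq ?mem_index_iota ?ltnS ?lc //= eqxx mul1r.
  by rewrite big1 ?addr0 // => y yl; rewrite eq_sym (negbTE yl) mul0r.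
rewrite (le_trans (ler_normB _ _)) // lerD ?sign_sum_classes_le //.
exact: (abs_sign_sum_le (h := h) Ah0 s pmax_bounded Hh).
Qed.

Lemma sum_margin_dominator_le : \sum_s margin_dominator s <= (3 * c%:R + 1) * X0.
Proof.
have pmax_le j : `|pmax h0 j| <= M.
  rewrite pmaxE //; apply: (max_other_abs_le c2 (lc j)) => y yc /=.
  exact: HSy_abs_le yc (Ah0 yc) (Xu j).
have ind_le1 y j : `|(l j == y)%:R : R| <= 1 by case: (l j == y); rewrite ?normr1 ?normr0.
have S1 := sum_classes_le ind_le1.
have S2 := radsum_pmax_le.
have S3 : radsum classes (fun h j => - pmax h j) <= c%:R * X0 by rewrite radsumN.
have S4 : \sum_s `|sign_sum s pmax h0| <= X0 by exact: sum_abs_rsign_le M_ge0 pmax_le.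
rewrite !big_split /= -/(radsum classes pmax) -/(radsum classes (fun h j => - pmax h j)).
lra.
Qed.

End ManyLabels.

Lemma HS_sign_sum_dominated : (2 <= c)%N -> exists G : signs -> R,
  [/\ forall s, 0 <= G s,
      forall s m, HS S Kp Km Bp Bm xs ys c m ->
        `|\sum_j rsign R s j * m (u j) (l j)| <= G s &
      \sum_s G s <= c%:R * (2 * c%:R - 1) * X0].
Proof.
move=> c2; have cR : 2 <= c%:R :> R by rewrite (ler_nat R 2 c).
have X0_ge0 : 0 <= X0 by rewrite mulr_ge0 // mulr_ge0 ?sqrtr_ge0.
suff [G [G0 Gm GX]] : exists G : signs -> R,
    [/\ forall s, 0 <= G s,
        forall s h, classes h -> `|\sum_j rsign R s j * margin h j| <= G s &
        \sum_s G s <= c%:R * (2 * c%:R - 1) * X0].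
  by exists G; split => // s _ [h [Hh ->]]; exact: Gm.
have [c_eq2|c_neq2] := eqVneq c 2%N.
  exists (fun s =>
    \sum_(1 <= y < c.+1) class_bound (fun j => if l j == y then 1 else -1) s).
  split=> [s|s h Hh|]; first by apply: sumr_ge0 => y _; exact: class_bound_ge0.
    exact: sign_sum_margin_two.
  apply: le_trans (sum_classes_le _) _ => [y j|].
    by case: ifP; rewrite ?normrN normr1.
  by rewrite ler_wpM2r //; nra.
have c3 : 3 <= c%:R :> R by rewrite (ler_nat R 3 c) ltn_neqAle eq_sym c_neq2 c2.
have [[h0 Ah0]|no_class] := pselect (exists h0, classes h0); last first.
  exists (fun _ => 0); split=> // [s h Hh|]; first by case: no_class; exists h.
  by rewrite big1 // mulr_ge0 // mulr_ge0; lra.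
exists (margin_dominator h0); split=> [s|s h Hh|].
- exact: margin_dominator_ge0.
- exact: sign_sum_margin_le.
- by apply: le_trans (sum_margin_dominator_le c2 Ah0) _; rewrite ler_wpM2r //; nra.
Qed.

End MarginRademacher.

Lemma ereal_supD_le (R : realType) (A B : set (\bar R)) (s : \bar R) :
  A 0%E -> B 0%E -> (forall x, A x -> 0 <= x)%E -> (forall y, B y -> 0 <= y)%E ->
  (forall x y, A x -> B y -> x + y <= s)%E -> (ereal_sup A + ereal_sup B <= s)%E.
Proof.
move=> A0 B0 A_ge0 B_ge0 AB; have [->|s_fin] := eqVneq s +oo%E; first exact: leey.
have s_ge0 : (0 <= s)%E by have := AB _ _ A0 B0; rewrite adde0.
have fin x : (0 <= x)%E -> (x <= s)%E -> x \is a fin_num.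
  by move=> x0 xs; rewrite ge0_fin_numE // (le_lt_trans xs) // ltey.
have supA_fin : ereal_sup A \is a fin_num.
  apply: fin; first exact: ereal_sup_ubound A0.
  by apply: ge_ereal_sup => x Ax; have := AB _ _ Ax B0; rewrite adde0.
rewrite addeC -leeBrDr //; apply: ge_ereal_sup => y By.
have y_fin : y \is a fin_num.
  by apply: fin (B_ge0 _ By) _; have := AB _ _ A0 By; rewrite add0e.
rewrite leeBrDr // addeC -leeBrDr //; apply: ge_ereal_sup => x Ax.
by rewrite leeBrDr //; exact: AB.
Qed.

(* The integrand of the Rademacher complexity, a supremum over the class, need
   not be measurable.  For nonnegative functions the integral is the supremum of
   the integrals of simple minorants, which gives monotonicity and
   superadditivity without any measurability assumption. *)
Section IntegralWithoutMeasurability.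
Local Open Scope ereal_scope.
Import HBNNSimple.
Variables (d : measure_display) (O : measurableType d) (R : realType).
Variable mu : {measure set O -> \bar R}.

Lemma ge0_le_integralT (f g : O -> \bar R) : (forall x, 0 <= f x) ->
  (forall x, f x <= g x) -> \int[mu]_x f x <= \int[mu]_x g x.
Proof.
move=> f0 fg; rewrite !ge0_integralTE // => [|x]; last exact: le_trans (f0 x) (fg x).
apply: ereal_sup_le => _ [h hf <-]; exists h => // x; exact: le_trans (hf x) (fg x).
Qed.

Lemma ge0_integralD_le (f g : O -> \bar R) :
  (forall x, 0 <= f x) -> (forall x, 0 <= g x) ->
  \int[mu]_x f x + \int[mu]_x g x <= \int[mu]_x (f x + g x).
Proof.
move=> f0 g0; rewrite !ge0_integralTE // => [|x]; last exact: adde_ge0.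
apply: ereal_supD_le.
- by exists nnsfun0 => //; exact: sintegral0.
- by exists nnsfun0 => //; exact: sintegral0.
- by move=> _ [h _ <-]; exact: sintegral_ge0.
- by move=> _ [h _ <-]; exact: sintegral_ge0.
move=> _ _ [h1 H1 <-] [h2 H2 <-]; apply: ereal_sup_ubound.
by exists (add_nnsfun h1 h2); [move=> x /=; rewrite EFinD leeD | exact: sintegralD].
Qed.

Lemma ge0_integral_sum_le (I : Type) (r : seq I) (F : I -> O -> \bar R) :
  (forall i x, 0 <= F i x) ->
  \sum_(i <- r) \int[mu]_x F i x <= \int[mu]_x \sum_(i <- r) F i x.
Proof.
move=> F0; elim: r => [|i r IH].
  by rewrite big_nil; apply: integral_ge0 => x _; rewrite big_nil.
rewrite big_cons (le_trans (leeD2l _ IH)) // (le_trans (ge0_integralD_le (F0 i) _)) //.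
  by move=> x; exact: sume_ge0.
apply: ge0_le_integralT => x; last by rewrite big_cons.
by rewrite adde_ge0 // sume_ge0.
Qed.

Lemma integral_le_funepos (f : O -> \bar R) : \int[mu]_x f x <= \int[mu]_x f^\+ x.
Proof.
rewrite [leLHS]integralE.
have := @integral_ge0 _ _ _ mu setT f^\- (fun x _ => funeneg_ge0 f x).
by move/(leeB (lexx (\int[mu]_x f^\+ x))); rewrite sube0.
Qed.

End IntegralWithoutMeasurability.

Section ProbabilityIntegral.
Local Open Scope ereal_scope.
Variables (d : measure_display) (O : measurableType d) (R : realType).
Variable P : probability O R.

Lemma sum_integral_le (I : finType) (F : I -> O -> \bar R) (g : I -> O -> R) (B : R) :
  (0 <= B)%R -> (forall i x, 0 <= g i x)%R -> (forall i x, F i x <= (g i x)%:E) ->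
  (forall x, \sum_i g i x <= B)%R -> \sum_i \int[P]_x F i x <= B%:E.
Proof.
move=> B0 g0 Fg gB.
apply: le_trans (_ : _ <= \sum_i \int[P]_x (F i)^\+ x) _.
  by apply: lee_sum => i _; exact: integral_le_funepos.
apply: le_trans (ge0_integral_sum_le _ _ (fun i x => funepos_ge0 _ x)) _.
apply: le_trans (_ : _ <= \int[P]_x (cst B%:E) x) _.
  apply: ge0_le_integralT => x; first exact: sume_ge0.
  apply: le_trans (_ : _ <= \sum_i (g i x)%:E) _; last by rewrite sumEFin lee_fin.
  by apply: lee_sum => i _; rewrite funeposE ge_max Fg lee_fin g0.
rewrite integral_cst //; set PT := (X in _ * X).
have -> : PT = 1 by exact: probability_setT.
by rewrite mule1.
Qed.

Lemma Rademacher_le (T : Type) (n : nat) (Z : 'I_n -> O -> T * nat)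
    (A : set (T -> nat -> R)) (K : R) : (0 <= K)%R ->
  (forall w, exists G : {ffun 'I_n -> bool} -> R,
     [/\ forall s, (0 <= G s)%R,
         forall s m, A m ->
           (`|\sum_i rsign R s i * m (Z i w).1 (Z i w).2| <= G s)%R &
         (\sum_s G s <= (2 ^ n)%:R * K)%R]) ->
  Rademacher P Z A <= (n%:R^-1 * K)%R%:E.
Proof.
move=> K0 dominated; have [G HG] := choice dominated.
have pow2_gt0 : (0 < (2 ^ n)%:R :> R)%R by rewrite ltr0n expn_gt0.
rewrite /Rademacher; set I := (X in _ * X).
have HI : I <= ((2 ^ n)%:R * (n%:R^-1 * K))%R%:E.
  apply: (sum_integral_le (g := fun s w => n%:R^-1 * G w s)%R) => [|s w|s w|w].
  - by rewrite mulr_ge0 // mulr_ge0 ?invr_ge0.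
  - by case: (HG w) => G0 _ _; rewrite mulr_ge0 ?invr_ge0.
  - case: (HG w) => _ Gm _; apply: ge_ereal_sup => _ [m Am <-].
    by rewrite lee_fin normrM ger0_norm ?invr_ge0 // ler_wpM2l ?invr_ge0 ?Gm.
  - by case: (HG w) => _ _ GK; rewrite -mulr_sumr mulrCA ler_wpM2l ?invr_ge0.
apply: le_trans (lee_wpmul2l _ HI) _; first by rewrite lee_fin invr_ge0 ltW.
by rewrite -EFinM mulKf ?gt_eqF.
Qed.

End ProbabilityIntegral.

Lemma invr_mul_sqrt (R : rcfType) (x : R) : 0 <= x -> x^-1 * Num.sqrt x = (Num.sqrt x)^-1.
Proof.
move=> x0; rewrite -{1}(sqr_sqrtr x0) expr2 invfM -mulrA.
by have [->|sx0] := eqVneq (Num.sqrt x) 0; rewrite ?invr0 ?mul0r // mulVf ?mulr1.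
Qed.

Theorem lemmaE3 (R : realType) (d c n : nat) (X : set (d.-tuple R))
  (S : d.-tuple R -> d.-tuple R -> R)
  (lam : nat -> R) (phi : nat -> d.-tuple R -> R)
  (C Bp Bm Rr delta : R)
  (dO : measure_display) (O : measurableType dO) (P : probability O R)
  (D : probability (d.-tuple R * nat)%type R)
  (Z Z' : 'I_n -> O -> (d.-tuple R * nat)%type) :
  compact (@rowv R d @` X) ->
  (2 <= c)%N ->
  (* training sample and (ghost) sample defining the expectation: i.i.d. ~ D *)
  iid_from P D Z -> iid_from P D Z' ->
  (forall i w, X (Z i w).1 /\ (1 <= (Z i w).2 <= c)%N) ->
  (forall i w, X (Z' i w).1 /\ (1 <= (Z' i w).2 <= c)%N) ->
  (* S : X x X -> [0,1], symmetric, continuous *)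
  (forall x t, X x -> X t -> 0 <= S x t <= 1) ->
  (forall x t, X x -> X t -> S x t = S t x) ->
  {within (@rowv R d @` X) `*` (@rowv R d @` X),
     continuous (fun p : 'rV[R]_d * 'rV[R]_d => S (tupv p.1) (tupv p.2))} ->
  (* (lam_k, phi_k) : eigenvalues / orthonormal eigenfunctions of L_S *)
  (forall k l, intX X (fun t => phi k t * phi l t) = ((k == l)%:R)%:E) ->
  (forall k x, X x -> intX X (fun t => S x t * phi k t) = (lam k * phi k x)%:E) ->
  (forall x t, X x -> X t ->
     (fun N => \sum_(k < N) lam k * phi k x * phi k t) @ \oo --> S x t) ->
  (* sum_k lam_k |phi_k(x)|^2 < C *)
  0 < C ->
  (forall x, X x -> cvgn (series (fun k => lam k * `|phi k x| ^+ 2)) /\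
                    limn (series (fun k => lam k * `|phi k x| ^+ 2)) < C) ->
  0 < Bp -> 0 < Bm -> 0 < Rr ->
  (forall x, X x -> (`|Splus_diag lam phi x| <= (Rr ^+ 2)%:E)%E) ->
  (forall x, X x -> (`|Sminus_diag lam phi x| <= (Rr ^+ 2)%:E)%E) ->
  0 < delta < 1 ->
  exists E : set O, [/\ measurable E, ((1 - delta)%:E <= P E)%E &
    forall w, E w ->
      (Rademacher P Z'
         (HS S (Splus lam phi) (Sminus lam phi) Bp Bm
            (fun i => (Z i w).1) (fun i => (Z i w).2) c)
       <= (Rr * (2 * c%:R - 1) * c%:R * (Bp + Bm) / Num.sqrt n%:R
           + 2 * c%:R * (2 * c%:R - 1) * (Bp + Bm) * Rr ^+ 2
             * Num.sqrt (ln (2 / delta) / (2 * n%:R)))%:E)%E].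
Proof.
move=> _ c2 _ _ HZ HZ' _ _ _ _ _ Hexp _ _ Bp0 Bm0 Rr0 Hdp Hdm /andP[delta0 delta1].
exists setT; split=> // [|w _].
  have -> : P setT = 1%E by exact: probability_setT.
  by rewrite lee_fin lerBlDr lerDl ltW.
have Hdp' x Xx := le_trans (lee_abs _) (Hdp x Xx).
have Hdm' x Xx := le_trans (lee_abs _) (Hdm x Xx).
have [Kp_sym Kp_psd Kp_diag] := Splus_bounded_psd Hdp'.
have [Km_sym Km_psd Km_diag] := Sminus_bounded_psd Hdm'.
have S_decomp x t Xx Xt := Splus_sub_Sminus Hdp' Hdm' Xx Xt (Hexp x t Xx Xt).
have cR : 2 <= c%:R :> R by rewrite (ler_nat R 2 c).
set K := c%:R * (2 * c%:R - 1) * ((Bp + Bm) * Rr * Num.sqrt n%:R).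
have K0 : 0 <= K by rewrite !mulr_ge0 ?sqrtr_ge0 //; lra.
apply: le_trans (Rademacher_le P K0 _) _ => [w'|].
  have [G [G0 Gm GK]] := HS_sign_sum_dominated (ltW Rr0) Kp_sym Kp_psd Km_sym Km_psd
    Kp_diag Km_diag S_decomp (fun i => (Z i w).2) (fun i => (HZ i w).1)
    (ltW Bp0) (ltW Bm0) (fun j => (HZ' j w').1) (fun j => (HZ' j w').2) c2.
  by exists G; split=> //; rewrite (le_trans GK) // /K mulrCA.
have -> : n%:R^-1 * K = Rr * (2 * c%:R - 1) * c%:R * (Bp + Bm) / Num.sqrt n%:R.
  by rewrite /K -(invr_mul_sqrt (ler0n R n)); ring.
by rewrite lee_fin lerDl !mulr_ge0 ?sqrtr_ge0 ?sqr_ge0 //; lra.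
Qed.
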